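(* Let $n\ge 3$, let $a_0,\ldots,a_{n-1}$ be indeterminates over $\mathbb{Q}$, and let $f=x^n+a_{n-1}x^{n-1}+\cdots+a_0$ with roots $r_1,\ldots,r_n$. Let $D_2\in\mathbb{Q}[a_0,\ldots,a_{n-1}]$ be the polynomial obtained by expressing $\prod_{1\le i,j,k\le n,\ i<j,\ j\ne k,\ k\ne i}(2r_k-r_i-r_j)$ in terms of $a_0,\ldots,a_{n-1}$ via Vieta's formulas. Then the total degree of $D_2$ in $(a_0,\ldots,a_{n-1})$ is $3(n-1)(n-2)/2$. *)

From mathcomp Require Import all_boot all_algebra.
From mathcomp Require Import mpoly.
Set Implicit Arguments. Unset Strict Implicit. Unset Printing Implicit Defensive.
Import GRing.Theory.
Local Open Scope ring_scope.

(* Total degree of a multivariate polynomial: msize p = 1 + deg p (0 for p = 0). *)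
Definition total_degree (n : nat) (R : nzRingType) (p : {mpoly R[n]}) : nat :=
  (msize p).-1.

(* The roots r_1..r_n are the variables 'X_0..'X_(n-1) of {mpoly rat[n]}. *)
Definition D2_roots (n : nat) : {mpoly rat[n]} :=
  \prod_(i : 'I_n) \prod_(j : 'I_n | (i < j)%N)
     \prod_(k : 'I_n | (k != i) && (k != j))
        ('X_k *+ 2 - 'X_i - 'X_j).

(* Vieta: the coefficient a_i (of x^i in the monic f) equals (-1)^(n-i) e_(n-i)(r). *)
Definition vieta_coeffs (n : nat) : n.-tuple {mpoly rat[n]} :=
  [tuple (-1) ^+ (n - i) * mesym n rat (n - i) | i < n].

From mathcomp Require Import all_boot all_order all_algebra.
From mathcomp Require Import perm mpoly ssrcomplements zify.
Set Implicit Arguments. Unset Strict Implicit. Unset Printing Implicit Defensive.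
Import Order.TTheory GRing.Theory.

(* Up to signs and the reindexing i |-> n - i, the a_i are the elementary
   symmetric polynomials e_1..e_n, so D2 has the total degree of the unique t
   with t(e_1, ..., e_n) = D2_roots.  As D2_roots is homogeneous, t is
   weighted homogeneous, so for the degree-lexicographic order all the
   e^m, m in supp t, have leading monomials of the same degree; these leading
   monomials are pairwise distinct and the exponent of r_1 in the one of e^m
   is |m|.  Hence deg t is the exponent of r_1 in the leading monomial of
   D2_roots, i.e. the number of factors 2 r_k - r_i - r_j involving r_1:
   (n-1)(n-2)/2 with k = 1 and (n-1)(n-2) with i = 1. *)

Lemma sum1_gtn n (i : nat) : \sum_(j < n | i < j) 1 = n - i.+1.
Proof.
elim: n => [|n IHn]; first by rewrite big_ord0.
by rewrite big_mkcond big_ord_recr /= -big_mkcond IHn; case: ltnP; lia.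
Qed.

Lemma sum_subnS n : \sum_(i < n) (n - i.+1) = 'C(n, 2).
Proof.
rewrite -bin2_sum big_mkord (reindex_inj rev_ord_inj) /=.
by apply: eq_bigr => i _; have := ltn_ord i; lia.
Qed.

Lemma sum1_neq2 n (a b : 'I_n) :
  a != b -> \sum_(k < n | (k != a) && (k != b)) 1 = n - 2.
Proof.
move=> ab; rewrite sum1dep_card.
have -> : [set k : 'I_n | (k != a) && (k != b)] = ~: [set a; b].
  by apply/setP => k; rewrite !inE negb_or.
by have := cardsC [set a; b]; rewrite cards2 ab card_ord; lia.
Qed.

Lemma sum_eq_ord0 n (i j : 'I_n.+1) : i != ord0 -> j != ord0 ->
  \sum_(k < n.+1 | (k != i) && (k != j)) (k == ord0) = 1.
Proof.
move=> i0 j0; rewrite (bigD1 ord0) 1?eq_sym ?i0 1?eq_sym ?j0 //= big1 // => k /andP[_ k0].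
by rewrite (negbTE k0).
Qed.

(* Terms with i = 0 count n (n - 1), those with k = 0 count 'C(n, 2). *)
Lemma sum_head_count n :
  \sum_(i < n.+1) \sum_(j < n.+1 | i < j) \sum_(k < n.+1 | (k != i) && (k != j))
     ((k == ord0) || (i == ord0)) = 3 * 'C(n, 2).
Proof.
have head : \sum_(j < n.+1 | 0 < j) \sum_(k < n.+1 | (k != ord0) && (k != j))
              ((k == ord0) || (ord0 == ord0 :> 'I_n.+1)) = n * n.-1.
  rewrite (eq_bigr (fun _ => n.-1)) => [|j j0]; last first.
    under eq_bigr do rewrite orbT.
    by rewrite sum1_neq2 ?subSS ?subn1 // -val_eqE eq_sym -lt0n.
  by rewrite big_mkcond big_ord_recl /= add0n big_const_ord iter_addn_0 mulnC.
have tail (i : 'I_n) : \sum_(j < n.+1 | lift ord0 i < j)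
    \sum_(k < n.+1 | (k != lift ord0 i) && (k != j)) ((k == ord0) || (lift ord0 i == ord0))
    = n - i.+1.
  rewrite (eq_bigr (fun _ => 1)) => [|j ij]; first by rewrite sum1_gtn.
  under eq_bigr do rewrite orbF.
  by rewrite sum_eq_ord0 // -val_eqE -lt0n (leq_ltn_trans _ ij).
rewrite big_ord_recl head (eq_bigr _ (fun i _ => tail i)) sum_subnS.
by have := mul_bin_diag n 1; rewrite bin1; lia.
Qed.

Local Open Scope ring_scope.

Lemma lemc_head n (m1 m2 : 'X_{1..n.+1}) :
  mdeg m1 = mdeg m2 -> (m1 <= m2)%O -> (m1 ord0 <= m2 ord0)%N.
Proof.
move=> eq_deg; rewrite leEmnm eq_deg lexi_cons lexx /= !(mnm_nth 0%N) {eq_deg}.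
case: m1 m2 => [[[|x1 s1] ?]] [[[|x2 s2] ?]] //=.
by rewrite lexi_cons leEnat => /andP[].
Qed.

Lemma dhomog1_mlead_head (R : nzRingType) n (F : {mpoly R[n.+1]}) :
  F \is 1.-homog -> mlead F ord0 = (F@_U_(ord0) != 0).
Proof.
move=> F_homog; have [->|F_neq0] := eqVneq F 0.
  by rewrite mlead0 mnm0E mcoeff0 eqxx.
have F_lead := mlead_supp F_neq0.
have /eqP/mdeg1P[l /eqP lead_l] := dhomog_mf F_homog F_lead.
have [l0|l_neq0] := eqVneq l ord0.
  by move: F_lead; rewrite lead_l l0 mnm1E eqxx mcoeff_msupp => ->.
rewrite lead_l mnm1E (negbTE l_neq0).
suff /negbTE U0_notin : U_(ord0)%MM \notin msupp F by rewrite -mcoeff_msupp U0_notin.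
apply/negP => /msupp_le_mlead.
rewrite lead_l => /lemc_head; rewrite !mdeg1 !mnm1E eqxx (negbTE l_neq0).
by move/(_ erefl).
Qed.

Lemma exists_dhomog_prod (R : nzRingType) n (I : Type) (r : seq I) (P : pred I)
    (F : I -> {mpoly R[n]}) :
  (forall i, P i -> exists d, F i \is d.-homog) ->
  exists d, \prod_(i <- r | P i) F i \is d.-homog.
Proof.
move=> F_homog; elim/big_rec: _ => [|i q Pi [d q_homog]].
  by exists 0%N; exact: dhomog1.
by have [e Fi_homog] := F_homog i Pi; exists (e + d)%N; exact: dhomogM.
Qed.

Lemma big_ltn_perm (R : Type) (idx : R) (op : Monoid.com_law idx) n (s : 'S_n)
    (F : 'I_n -> 'I_n -> R) : (forall i j, F i j = F j i) ->
  \big[op/idx]_(i < n) \big[op/idx]_(j < n | (i < j)%N) F (s i) (s j) =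
  \big[op/idx]_(i < n) \big[op/idx]_(j < n | (i < j)%N) F i j.
Proof.
move=> FC; rewrite !pair_big_dep /=.
(* Split both sides according to whether s preserves the order of the pair;
   the concordant parts agree and the discordant ones are swapped. *)
have s2_inj : injective (fun p : 'I_n * 'I_n => (s p.1, s p.2)).
  by move=> [? ?] [? ?] [/perm_inj-> /perm_inj->].
rewrite [RHS](reindex_inj s2_inj) /=.
rewrite (bigID (fun p : 'I_n * 'I_n => s p.1 < s p.2)%N).
rewrite [RHS](bigID (fun p : 'I_n * 'I_n => p.1 < p.2)%N) /=.
congr (op _ _); first by apply: eq_bigl => p; rewrite andbC.
have swap_inj : injective (fun p : 'I_n * 'I_n => (p.2, p.1)).
  by move=> [? ?] [? ?] [-> ->].
rewrite [RHS](reindex_inj swap_inj) /=.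
apply: eq_big => [[i j] /=|[i j] _]; last exact: FC.
case: (ltngtP i j) => [ij|ij|/val_inj->]; last by rewrite !ltnn.
all: case: (ltngtP (s i) (s j)) => [//|//|/val_inj/perm_inj eq_ij].
all: by move: ij; rewrite eq_ij ltnn.
Qed.

Lemma msymXU n (R : nzRingType) (s : 'S_n) (i : 'I_n) :
  msym s ('X_i : {mpoly R[n]}) = 'X_(s i).
Proof. by rewrite /msym mmapX mmap1U. Qed.

Lemma comp_mpolyA (R : comNzRingType) n k l (p : {mpoly R[n]})
    (lq : n.-tuple {mpoly R[k]}) (lr : k.-tuple {mpoly R[l]}) :
  (p \mPo lq) \mPo lr = p \mPo [tuple tnth lq i \mPo lr | i < n].
Proof.
rewrite (comp_mpolyEX p lq) (comp_mpolyEX p [tuple _ | i < n]) raddf_sum /=.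
apply: eq_bigr => m _; rewrite comp_mpolyZ !comp_mpolyX rmorph_prod /=.
by congr (_ *: _); apply: eq_bigr => i _; rewrite rmorphXn tnth_mktuple.
Qed.

Lemma msizeM_leq (R : idomainType) n (p q : {mpoly R[n]}) :
  (msize (p * q) <= (msize p + msize q).-1)%N.
Proof.
have [->|p_neq0] := eqVneq p 0; first by rewrite mul0r msize0.
have [->|q_neq0] := eqVneq q 0; first by rewrite mulr0 msize0.
by rewrite msizeM.
Qed.

Lemma msizeX_leq (R : idomainType) n (q : {mpoly R[n]}) k :
  (msize (q ^+ k) <= ((msize q).-1 * k).+1)%N.
Proof.
elim: k => [|k IHk]; first by rewrite expr0 msize1.
by rewrite exprS (leq_trans (msizeM_leq _ _)) //; move: IHk; lia.
Qed.

Lemma msize_comp_leq (R : idomainType) n k (p : {mpoly R[n]})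
    (lq : n.-tuple {mpoly R[k]}) :
  (forall i, msize (tnth lq i) <= 2)%N -> (msize (p \mPo lq) <= msize p)%N.
Proof.
move=> lq_lin; rewrite comp_mpolyE (leq_trans (msize_sum _ _ _)) //.
apply/bigmax_leqP_seq => m m_p _; rewrite (leq_trans (msizeZ_le _ _)) //.
apply: leq_trans (msize_mdeg_lt m_p); rewrite mdegE.
elim/big_rec2: _ => [|i s q _ IHq]; first by rewrite msize1.
have le_Xi : (msize (tnth lq i ^+ m i) <= (m i).+1)%N.
  apply: leq_trans (msizeX_leq _ _) _; rewrite ltnS -[leqRHS]mul1n leq_mul2r.
  by apply/orP; right; have := lq_lin i; lia.
by have := msizeM_leq (tnth lq i ^+ m i) s; move: IHq le_Xi; lia.
Qed.

Section ElementarySymmetricLead.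
Context (R : idomainType) (n : nat).
Local Notation S := [tuple mesym n R i.+1 | i < n].

Lemma mlead_mesymX (m : 'X_{1..n}) :
  mlead ('X_[R, m] \mPo S) = [multinom (\sum_(j < n | i <= j) m j)%N | i < n].
Proof.
rewrite comp_mpolyX mlead_prod => [|j _ _]; last first.
  by rewrite tnth_mktuple expf_neq0 // mesym_neq0.
apply/mnmP => i; rewrite mnm_sumE !mnmE [RHS]big_mkcond /=; apply: eq_bigr => j _.
rewrite tnth_mktuple mleadX ?mesym_neq0 // mlead_mesym // mulmnE mnmE ltnS.
by case: leqP; rewrite ?mul1n ?mul0n.
Qed.

Lemma mlead_mesymX_inj : injective (fun m => mlead ('X_[R, m] \mPo S)).
Proof.
move=> m1 m2 /=; rewrite !mlead_mesymX => /mnmP eqL.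
pose L (m : 'X_{1..n}) k := (\sum_(j < n | k <= j) m j)%N.
have {}eqL k : L m1 k = L m2 k.
  have [lt_kn|le_nk] := ltnP k n; first by have := eqL (Ordinal lt_kn); rewrite !mnmE.
  by rewrite /L !big1 // => j; rewrite leqNgt (leq_trans (ltn_ord j) le_nk).
have LS m (i : 'I_n) : L m i = (m i + L m i.+1)%N.
  rewrite /L (bigD1 i) //=; congr (_ + _)%N; apply: eq_bigl => j.
  by rewrite ltn_neqAle andbC eq_sym.
by apply/mnmP => i; have := LS m2 i; rewrite -!eqL LS => /addIn.
Qed.

Lemma mlead_comp_mesym (t : {mpoly R[n]}) : t != 0 ->
  exists2 m0, m0 \in msupp t &
    mlead (t \mPo S) = mlead ('X_[R, m0] \mPo S) /\
    {in msupp t, forall m, (mlead ('X_[R, m] \mPo S) <= mlead ('X_[R, m0] \mPo S))%O}.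
Proof.
move=> t_neq0; set L := fun m => mlead ('X_[R, m] \mPo S).
have leadZ : {in msupp t, forall m, mlead (t@_m *: ('X_[m] \mPo S)) = L m}.
  by move=> m; rewrite mcoeff_msupp => /mleadZ.
rewrite comp_mpolyEX mlead_sum; last first.
  rewrite filter_predT (eq_in_map _ L _).1 // map_inj_uniq ?msupp_uniq //.
  exact: mlead_mesymX_inj.
rewrite big_seq (eq_bigr _ leadZ) -big_seq.
have /(eq_bigjoin L le_total) [m0 m0_t /eqP join_m0] : msupp t != [::].
  by rewrite msupp_eq0.
exists m0 => //; split=> // m m_t; change (L m <= L m0)%O.
by rewrite -join_m0; exact: joins_sup_seq.
Qed.

End ElementarySymmetricLead.

Section WeightedHomogeneousDegree.
Context (R : idomainType) (n : nat).
Local Notation S := [tuple mesym n.+1 R i.+1 | i < n.+1].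

Lemma mlead_mesymX_head (m : 'X_{1..n.+1}) : mlead ('X_[R, m] \mPo S) ord0 = mdeg m.
Proof. by rewrite mlead_mesymX mnmE mdegE big_mkcond. Qed.

Lemma mdeg_mlead_mesymX (m : 'X_{1..n.+1}) :
  mdeg (mlead ('X_[R, m] \mPo S)) = mnmwgt m.
Proof.
have XS_neq0 : 'X_[R, m] \mPo S != 0.
  rewrite comp_mpolyX; apply/prodf_neq0 => i _.
  by rewrite tnth_mktuple expf_neq0 ?mesym_neq0.
exact: dhomog_mf (dhomog_XS R m) _ (mlead_supp XS_neq0).
Qed.

Lemma msize_comp_mesym (t : {mpoly R[n.+1]}) d : t \is d.-homog for mnmwgt ->
  (msize t).-1 = mlead (t \mPo S) ord0.
Proof.
move=> t_homog; have [->|t_neq0] := eqVneq t 0.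
  by rewrite comp_mpoly0 mlead0 msize0 mnm0E.
have [m0 m0_t [-> le_m0]] := mlead_comp_mesym t_neq0.
have le_deg m : m \in msupp t -> (mdeg m <= mdeg m0)%N.
  move=> m_t; rewrite -!mlead_mesymX_head; apply: lemc_head (le_m0 _ m_t).
  by rewrite !mdeg_mlead_mesymX !(dhomog_mf t_homog).
rewrite mlead_mesymX_head -(mlead_deg t_neq0) /=.
apply/eqP; rewrite eqn_leq le_deg ?mlead_supp //=.
by rewrite -ltnS (mlead_deg t_neq0) msize_mdeg_lt.
Qed.

End WeightedHomogeneousDegree.

Section SignedReversal.
Context (R : idomainType) (n : nat).

Definition signed_rev (e : nat) : n.-tuple {mpoly R[n]} :=
  [tuple (-1) ^+ (e + i) * 'X_(rev_ord i) | i < n].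

Lemma comp_mpoly_signX k (lq : n.-tuple {mpoly R[k]}) a (j : 'I_n) :
  ((-1) ^+ a * 'X_j) \mPo lq = (-1) ^+ a * tnth lq j.
Proof. by rewrite rmorphM rmorphXn rmorphN1 /= comp_mpolyXU -tnth_nth. Qed.

Lemma msize_signX a (j : 'I_n) : msize ((-1) ^+ a * 'X_j : {mpoly R[n]}) = 2.
Proof.
by rewrite -signr_odd; case: odd; rewrite ?expr1 ?expr0 ?mulN1r ?mul1r ?msizeN msizeX mdeg1.
Qed.

Lemma comp_signed_revK e f (p : {mpoly R[n]}) : ~~ odd (e + f + n.-1) ->
  (p \mPo signed_rev e) \mPo signed_rev f = p.
Proof.
move=> even_efn; rewrite comp_mpolyA -[RHS]comp_mpoly_id; congr (_ \mPo _).
apply: eq_from_tnth => i; rewrite !tnth_mktuple comp_mpoly_signX tnth_mktuple rev_ordK.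
rewrite mulrA -exprD -signr_odd (_ : e + i + (f + rev_ord i) = e + f + n.-1)%N.
  by rewrite (negbTE even_efn) mul1r.
by rewrite /=; move: (ltn_ord i); move: (nat_of_ord i) => k; lia.
Qed.

Lemma msize_comp_signed_rev e (p : {mpoly R[n]}) :
  msize (p \mPo signed_rev e) = msize p.
Proof.
have lin f i : (msize (tnth (signed_rev f) i) <= 2)%N by rewrite tnth_mktuple msize_signX.
apply/eqP; rewrite eqn_leq msize_comp_leq //=.
rewrite -[X in (msize X <= _)%N](@comp_signed_revK e (e + n.-1)) ?msize_comp_leq //.
by rewrite addnA -addnA !addnn -doubleD odd_double.
Qed.

End SignedReversal.

Definition D2_factor n (i j k : 'I_n) : {mpoly rat[n]} := 'X_k *+ 2 - 'X_i - 'X_j.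

Lemma D2_factor_coeff n (i j k l : 'I_n) :
  (D2_factor i j k)@_U_(l) = (k == l)%:R *+ 2 - (i == l)%:R - (j == l)%:R.
Proof. by rewrite !mcoeffB mcoeffMn !mcoeffXU. Qed.

Lemma D2_factor_neq0 n (i j k : 'I_n) : k != i -> k != j -> D2_factor i j k != 0.
Proof.
move=> ki kj; apply/eqP => /(congr1 (mcoeff U_(k))).
by rewrite D2_factor_coeff mcoeff0 eqxx eq_sym (negbTE ki) eq_sym (negbTE kj) !subr0.
Qed.

Lemma D2_factor_homog n (i j k : 'I_n) : D2_factor i j k \is 1.-homog.
Proof. by rewrite !rpredB ?rpredMn // dhomogX; apply/eqP/mdeg1. Qed.

Lemma D2_factor_lead_head n (i j k : 'I_n.+1) : (i < j)%N -> k != i -> k != j ->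
  mlead (D2_factor i j k) ord0 = (k == ord0) || (i == ord0).
Proof.
move=> lt_ij ki kj; rewrite dhomog1_mlead_head ?D2_factor_homog // D2_factor_coeff.
have /negbTE -> : j != ord0 by rewrite -val_eqE -lt0n (leq_ltn_trans _ lt_ij).
have [k0|k0] := eqVneq k ord0; last by case: (i == ord0).
by have /negbTE -> : i != ord0 by rewrite -k0 eq_sym.
Qed.

Lemma msym_D2_factor n (s : 'S_n) (i j k : 'I_n) :
  msym s (D2_factor i j k) = D2_factor (s i) (s j) (s k).
Proof. by rewrite /D2_factor !msymB msymMn !msymXU. Qed.

Lemma D2_roots_sym n : D2_roots n \is symmetric.
Proof.
apply/issymP => s.
pose H (i j : 'I_n) := \prod_(k | (k != i) && (k != j)) D2_factor i j k.
have HC i j : H i j = H j i.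
  by apply: eq_big => [k|k _]; rewrite 1?andbC // /D2_factor addrAC.
have msymH i j : msym s (H i j) = H (s i) (s j).
  rewrite rmorph_prod [RHS](reindex_inj (@perm_inj _ s)) /=.
  by apply: eq_big => [k|k _]; rewrite ?(inj_eq perm_inj) ?msym_D2_factor.
change (msym s (\prod_(i < n) \prod_(j < n | (i < j)%N) H i j) =
        \prod_(i < n) \prod_(j < n | (i < j)%N) H i j).
rewrite rmorph_prod -[RHS](big_ltn_perm _ s HC); apply: eq_bigr => i _.
by rewrite rmorph_prod; apply: eq_bigr => j _; exact: msymH.
Qed.

Lemma D2_roots_homog n : exists d, D2_roots n \is d.-homog.
Proof.
do 3!apply: exists_dhomog_prod => ? _.
by exists 1%N; exact: D2_factor_homog.
Qed.

Lemma D2_roots_lead_head n : mlead (D2_roots n.+1) ord0 = (3 * 'C(n, 2))%N.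
Proof.
have H_neq0 (i j : 'I_n.+1) : \prod_(k | (k != i) && (k != j)) D2_factor i j k != 0.
  by apply/prodf_neq0 => k /andP[ki kj]; exact: D2_factor_neq0.
rewrite -sum_head_count /D2_roots mlead_prod => [|i _ _]; last first.
  by apply/prodf_neq0 => j _; exact: H_neq0.
rewrite mnm_sumE; apply: eq_bigr => i _.
rewrite mlead_prod => [|j _ _]; last exact: H_neq0.
rewrite mnm_sumE; apply: eq_bigr => j lt_ij.
rewrite mlead_prod => [|k _ /andP[ki kj]]; last exact: D2_factor_neq0.
rewrite mnm_sumE; apply: eq_bigr => k /andP[ki kj].
exact: D2_factor_lead_head.
Qed.

Lemma vieta_coeffs_signed_rev n :
  vieta_coeffs n =
  [tuple tnth (signed_rev rat n n) i \mPo [tuple mesym n rat i.+1 | i < n] | i < n].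
Proof.
apply: eq_from_tnth => i; rewrite !tnth_mktuple comp_mpoly_signX tnth_mktuple /= subnSK //.
by rewrite -signr_odd -[in RHS]signr_odd oddB ?oddD // ltnW.
Qed.

Theorem proposition3 (n : nat) (hn : (3 <= n)%N) :
  (exists D2 : {mpoly rat[n]}, D2 \mPo vieta_coeffs n = D2_roots n) /\
  (forall D2 : {mpoly rat[n]}, D2 \mPo vieta_coeffs n = D2_roots n ->
     total_degree D2 = (3 * (n - 1) * (n - 2) %/ 2)%N).
Proof.
case: n hn => [//|n] _.
pose S := [tuple mesym n.+1 rat i.+1 | i < n.+1].
pose W := signed_rev rat n.+1 n.+1.
have WS : vieta_coeffs n.+1 = [tuple tnth W i \mPo S | i < n.+1].
  exact: vieta_coeffs_signed_rev.
split.
  have [t [tS _]] := sym_fundamental (D2_roots_sym n.+1).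
  exists (t \mPo signed_rev rat n.+1 1).
  by rewrite WS -comp_mpolyA comp_signed_revK // !oddD /=; case: odd.
move=> D2 D2E; pose t := D2 \mPo W.
have tS : t \mPo S = D2_roots n.+1 by rewrite comp_mpolyA -WS.
have [d D2_homog] := D2_roots_homog n.+1.
have t_homog : t \is d.-homog for mnmwgt by rewrite mwmwgt_homogE tS.
rewrite /total_degree -(msize_comp_signed_rev n.+1 D2) (msize_comp_mesym t_homog) tS.
rewrite D2_roots_lead_head; have := mul_bin_diag n 1.
by rewrite bin1 !subSS subn0 subn1 -mulnA => ->; rewrite mulnCA mulKn.
Qed.
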